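(* For all $c>0$ and $t>0$, $$\log\Big(1+2c\sinh\frac{t}{2}\Big)\le \frac12\,\frac{t^2+(2c+1)t}{t+1}.$$ *)

From Stdlib Require Import Reals.

(* With q = exp (-t/2) we have 1 + 2c sinh (t/2) = exp (t/2) (q + c (1 - q^2)), so it
   suffices that ln (q + c (1 - q^2)) <= c t / (t + 1).  Bounding ln by its tangent at
   K = (1 - q^2)(t + 1) / t, and ln K by K - 1, removes c and leaves the inequality
   (1 - q^2 (1 + t))^2 <= t^2 (1 - q), which already follows from the first-order
   bounds 1 - t/2 <= q <= 1 / (1 + t/2). *)

From Stdlib Require Import Reals Lra.
Open Scope R_scope.

Lemma quartic_le_16 t : 0 <= t -> t <= 8 / 5 -> t * (2 + t) * (3 - t) ^ 2 <= 16.
Proof.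
  intros ht0 ht1.
  assert (0 <= t * (8 / 5 - t)) by nra.
  assert (0 <= t * t * (8 / 5 - t)) by nra.
  nra.
Qed.

Section Deficit.

Variables q t : R.
Hypothesis t_gt0 : 0 < t.
Hypothesis q_gt0 : 0 < q.
Hypothesis q_ge : 1 - t / 2 <= q.
Hypothesis q_le : q * (1 + t / 2) <= 1.

Let A := 1 - q ^ 2 * (1 + t).

Lemma deficit_ge0 : 0 <= A.
Proof.
  assert ((q * (2 + t)) ^ 2 <= 2 ^ 2) by (apply pow_incr; nra).
  unfold A; nra.
Qed.

Lemma deficit_sq_mul_le : A ^ 2 * (2 + t) <= t ^ 3.
Proof.
  pose proof deficit_ge0 as A_ge0.
  destruct (Rle_lt_dec t (8 / 5)) as [t_small | t_large].
  - assert ((1 - t / 2) ^ 2 <= q ^ 2) by (apply pow_incr; lra).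
    assert (A_le : A <= t ^ 2 * (3 - t) / 4) by (unfold A; nra).
    assert (A ^ 2 <= (t ^ 2 * (3 - t) / 4) ^ 2) by (apply pow_incr; lra).
    assert ((t ^ 2 * (3 - t) / 4) ^ 2 * (2 + t)
            = t ^ 3 * (t * (2 + t) * (3 - t) ^ 2) / 16) by field.
    pose proof (quartic_le_16 t (Rlt_le _ _ t_gt0) t_small).
    assert (0 <= t ^ 3) by (apply pow_le; lra).
    nra.
  - assert (A <= 1) by (unfold A; assert (0 <= q ^ 2 * (1 + t)) by nra; lra).
    assert (A ^ 2 <= 1) by nra.
    assert (2 + t <= t ^ 3) by nra.
    nra.
Qed.

Lemma deficit_sq_le : A ^ 2 <= t ^ 2 * (1 - q).
Proof.
  pose proof deficit_sq_mul_le as A_sq.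
  assert (q_gap : t <= (1 - q) * (2 + t)) by lra.
  apply Rmult_le_reg_r with (2 + t); [lra |].
  apply Rle_trans with (1 := A_sq).
  replace (t ^ 3) with (t ^ 2 * t) by ring.
  rewrite Rmult_assoc; apply Rmult_le_compat_l; [nra | exact q_gap].
Qed.

End Deficit.

Lemma ln_le_sub_1 x : 0 < x -> ln x <= x - 1.
Proof.
  intros x_gt0. rewrite <- (exp_ln x x_gt0) at 2.
  pose proof (exp_ineq1_le (ln x)). lra.
Qed.

Lemma ln_le_tangent x K : 0 < x -> 0 < K -> ln x <= ln K + x / K - 1.
Proof.
  intros x_gt0 K_gt0.
  replace x with (K * (x / K)) at 1 by (field; lra).
  rewrite ln_mult; [| exact K_gt0 | apply Rdiv_lt_0_compat; assumption].
  pose proof (ln_le_sub_1 (x / K) ltac:(apply Rdiv_lt_0_compat; assumption)).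
  lra.
Qed.

Lemma ln_le_of_deficit q t c : 0 < t -> 0 < q < 1 -> 0 < c ->
  (1 - q ^ 2 * (1 + t)) ^ 2 <= t ^ 2 * (1 - q) ->
  ln (q + c * (1 - q ^ 2)) <= c * t / (t + 1).
Proof.
  intros t_gt0 [q_gt0 q_lt1] c_gt0 deficit.
  set (b := 1 - q ^ 2).
  assert (b_gt0 : 0 < b) by (unfold b; nra).
  set (K := b * (t + 1) / t).
  assert (K_gt0 : 0 < K) by (unfold K; apply Rdiv_lt_0_compat; nra).
  pose proof (ln_le_tangent (q + c * b) K ltac:(nra) K_gt0).
  pose proof (ln_le_sub_1 K K_gt0).
  assert (gap : c * t / (t + 1) - ((q + c * b) / K + K - 2)
                = (t ^ 2 * (1 - q) - (b * (t + 1) - t) ^ 2) / (b * (t + 1) * t)).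
  { unfold K. field. repeat split; nra. }
  assert (0 <= (t ^ 2 * (1 - q) - (b * (t + 1) - t) ^ 2) / (b * (t + 1) * t)).
  { apply Rle_mult_inv_pos; [| nra].
    replace (b * (t + 1) - t) with (1 - q ^ 2 * (1 + t)) by (unfold b; ring). lra. }
  lra.
Qed.

Lemma exp_opp_mul_one_add_le_1 s : exp (- s) * (1 + s) <= 1.
Proof.
  rewrite exp_Ropp.
  pose proof (exp_pos s). pose proof (exp_ineq1_le s).
  apply Rmult_le_reg_r with (exp s); [lra |].
  field_simplify; lra.
Qed.

Lemma one_add_sinh_factor c s :
  1 + 2 * c * sinh s = exp s * (exp (- s) + c * (1 - exp (- s) ^ 2)).
Proof.
  unfold sinh. rewrite exp_Ropp.
  pose proof (exp_pos s). field. lra.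
Qed.

Theorem lemma3p6 (c t : R) (hc : 0 < c) (ht : 0 < t) :
  ln (1 + 2 * c * sinh (t / 2)) <= / 2 * ((t ^ 2 + (2 * c + 1) * t) / (t + 1)).
Proof.
  set (q := exp (- (t / 2))).
  assert (q_gt0 : 0 < q) by apply exp_pos.
  assert (q_ge : 1 - t / 2 <= q) by (pose proof (exp_ineq1_le (- (t / 2))); unfold q; lra).
  pose proof (exp_opp_mul_one_add_le_1 (t / 2)) as q_le; fold q in q_le.
  assert (q_lt1 : q < 1) by nra.
  pose proof (deficit_sq_le q t ht q_gt0 q_ge q_le) as deficit.
  rewrite one_add_sinh_factor; fold q.
  assert (0 < 1 - q ^ 2) by nra.
  rewrite ln_mult, ln_exp; [| apply exp_pos | nra].
  pose proof (ln_le_of_deficit q t c ht (conj q_gt0 q_lt1) hc deficit).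
  replace (/ 2 * ((t ^ 2 + (2 * c + 1) * t) / (t + 1))) with (t / 2 + c * t / (t + 1))
    by (field; lra).
  lra.
Qed.
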